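(* For every command $c$ and stores $\sigma,\sigma'$ of the While-language: $(c,\sigma)\Rightarrow^\infty$ if and only if $(c,\sigma,\Downarrow)\Rightarrow^{co}_G\sigma',\Uparrow$.
   Context: While-language syntax: variables $x$ range over a countably infinite set $\mathit{Var}$; $n$ ranges over natural numbers; values are $v ::= \mathsf{null}\mid n$ ($\mathsf{null}$ distinct from every natural number); expressions are $e ::= v\mid x\mid e_1\oplus e_2$ with $\oplus\in\{+,-,*\}$, where $\oplus(n_1,n_2)$ is the result of the operation on naturals; commands are $c ::= \mathsf{skip}\mid\mathsf{alloc}\ x\mid x:=e\mid c_1;c_2\mid \mathsf{if}\ e\ c_1\ c_2\mid\mathsf{while}\ e\ c$. A store $\sigma$ is a finite partial map from $\mathit{Var}$ to values, with domain $\mathrm{dom}(\sigma)$, lookup $\sigma(x)$, update $\sigma[x\mapsto v]$. Expression evaluation $(e,\sigma)\Rightarrow_E v$ is the least relation with: $(v,\sigma)\Rightarrow_E v$; $(x,\sigma)\Rightarrow_E\sigma(x)$ if $x\in\mathrm{dom}(\sigma)$; if $(e_1,\sigma)\Rightarrow_E n_1$ and $(e_2,\sigma)\Rightarrow_E n_2$ with $n_1,n_2$ naturals then $(e_1\oplus e_2,\sigma)\Rightarrow_E\oplus(n_1,n_2)$. Big-step relation $(c,\sigma)\Rightarrow_B\sigma'$ is the least relation with: $(\mathsf{skip},\sigma)\Rightarrow_B\sigma$; $(\mathsf{alloc}\ x,\sigma)\Rightarrow_B\sigma[x\mapsto\mathsf{null}]$ if $x\notin\mathrm{dom}(\sigma)$;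 $(x:=e,\sigma)\Rightarrow_B\sigma[x\mapsto v]$ if $x\in\mathrm{dom}(\sigma)$ and $(e,\sigma)\Rightarrow_E v$; $(c_1;c_2,\sigma)\Rightarrow_B\sigma''$ if $(c_1,\sigma)\Rightarrow_B\sigma'$ and $(c_2,\sigma')\Rightarrow_B\sigma''$; $(\mathsf{if}\ e\ c_1\ c_2,\sigma)\Rightarrow_B\sigma'$ if $(e,\sigma)\Rightarrow_E v$, $v\ne0$, $(c_1,\sigma)\Rightarrow_B\sigma'$; $(\mathsf{if}\ e\ c_1\ c_2,\sigma)\Rightarrow_B\sigma'$ if $(e,\sigma)\Rightarrow_E0$, $(c_2,\sigma)\Rightarrow_B\sigma'$; $(\mathsf{while}\ e\ c,\sigma)\Rightarrow_B\sigma''$ if $(e,\sigma)\Rightarrow_E v$, $v\ne0$, $(c,\sigma)\Rightarrow_B\sigma'$, $(\mathsf{while}\ e\ c,\sigma')\Rightarrow_B\sigma''$; $(\mathsf{while}\ e\ c,\sigma)\Rightarrow_B\sigma$ if $(e,\sigma)\Rightarrow_E0$. The big-step divergence predicate $(c,\sigma)\Rightarrow^\infty$ is the greatest predicate such that every element is the conclusion of an instance of one of these rules whose $\Rightarrow^\infty$-premises are in it: $(c_1,\sigma)\Rightarrow^\infty$ gives $(c_1;c_2,\sigma)\Rightarrow^\infty$; $(c_1,\sigma)\Rightarrow_B\sigma'$ and $(c_2,\sigma')\Rightarrow^\infty$ give $(c_1;c_2,\sigma)\Rightarrow^\infty$; $(e,\sigma)\Rightarrow_E v$, $v\ne0$,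 $(c_1,\sigma)\Rightarrow^\infty$ give $(\mathsf{if}\ e\ c_1\ c_2,\sigma)\Rightarrow^\infty$; $(e,\sigma)\Rightarrow_E0$, $(c_2,\sigma)\Rightarrow^\infty$ give $(\mathsf{if}\ e\ c_1\ c_2,\sigma)\Rightarrow^\infty$; $(e,\sigma)\Rightarrow_E v$, $v\ne0$, $(c,\sigma)\Rightarrow^\infty$ give $(\mathsf{while}\ e\ c,\sigma)\Rightarrow^\infty$; $(e,\sigma)\Rightarrow_E v$, $v\ne0$, $(c,\sigma)\Rightarrow_B\sigma'$, $(\mathsf{while}\ e\ c,\sigma')\Rightarrow^\infty$ give $(\mathsf{while}\ e\ c,\sigma)\Rightarrow^\infty$. Flag-based big-step semantics: status flags $\delta ::= \Downarrow\mid\Uparrow$ (convergent / divergent). Expression evaluation $(e,\sigma,\delta)\Rightarrow_{GE}v,\delta'$ is the least relation with: $(v,\sigma,\Downarrow)\Rightarrow_{GE}v,\Downarrow$; $(x,\sigma,\Downarrow)\Rightarrow_{GE}\sigma(x),\Downarrow$ if $x\in\mathrm{dom}(\sigma)$; if $(e_1,\sigma,\Downarrow)\Rightarrow_{GE}n_1,\delta$ and $(e_2,\sigma,\delta)\Rightarrow_{GE}n_2,\delta'$ ($n_1,n_2$ naturals) then $(e_1\oplus e_2,\sigma,\Downarrow)\Rightarrow_{GE}\oplus(n_1,n_2),\delta'$; and $(e,\sigma,\Uparrow)\Rightarrow_{GE}v,\Uparrow$ for every value $v$. The command rules for judgments $(c,\sigma,\delta)\Rightarrow_G\sigma',\delta'$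 are: $(\mathsf{skip},\sigma,\Downarrow)\Rightarrow_G\sigma,\Downarrow$; $(\mathsf{alloc}\ x,\sigma,\Downarrow)\Rightarrow_G\sigma[x\mapsto\mathsf{null}],\Downarrow$ if $x\notin\mathrm{dom}(\sigma)$; $(x:=e,\sigma,\Downarrow)\Rightarrow_G\sigma[x\mapsto v],\delta$ if $x\in\mathrm{dom}(\sigma)$ and $(e,\sigma,\Downarrow)\Rightarrow_{GE}v,\delta$; $(c_1;c_2,\sigma,\Downarrow)\Rightarrow_G\sigma'',\delta'$ if $(c_1,\sigma,\Downarrow)\Rightarrow_G\sigma',\delta$ and $(c_2,\sigma',\delta)\Rightarrow_G\sigma'',\delta'$; $(\mathsf{if}\ e\ c_1\ c_2,\sigma,\Downarrow)\Rightarrow_G\sigma',\delta'$ if $v\ne0$, $(e,\sigma,\Downarrow)\Rightarrow_{GE}v,\delta$ and $(c_1,\sigma,\delta)\Rightarrow_G\sigma',\delta'$; $(\mathsf{if}\ e\ c_1\ c_2,\sigma,\Downarrow)\Rightarrow_G\sigma',\delta'$ if $(e,\sigma,\Downarrow)\Rightarrow_{GE}0,\delta$ and $(c_2,\sigma,\delta)\Rightarrow_G\sigma',\delta'$; $(\mathsf{while}\ e\ c,\sigma,\Downarrow)\Rightarrow_G\sigma'',\delta''$ if $(e,\sigma,\Downarrow)\Rightarrow_{GE}v,\delta$, $v\ne0$, $(c,\sigma,\delta)\Rightarrow_G\sigma',\delta'$ and $(\mathsf{while}\ e\ c,\sigma',\delta')\Rightarrow_G\sigma'',\delta''$; $(\mathsf{while}\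 e\ c,\sigma,\Downarrow)\Rightarrow_G\sigma,\delta$ if $(e,\sigma,\Downarrow)\Rightarrow_{GE}0,\delta$; $(c,\sigma,\Uparrow)\Rightarrow_G\sigma',\Uparrow$ for every store $\sigma'$. $\Rightarrow^{co}_G$ denotes the coinductive interpretation of these command rules: the greatest relation such that every element is the conclusion of a rule instance whose command premises lie in it (the $\Rightarrow_{GE}$ premises refer to the expression relation above). *)

From HB Require Import structures.
From mathcomp Require Import all_boot finmap.
Set Implicit Arguments. Unset Strict Implicit. Unset Printing Implicit Defensive.
Local Open Scope fmap_scope.

Definition var := nat.

Inductive val : Type := Vnull | Vnat (n : nat).

Inductive binop : Type := Oplus | Ominus | Omult.

Definition eval_op (o : binop) (n1 n2 : nat) : nat :=
  match o with Oplus => n1 + n2 | Ominus => n1 - n2 | Omult => n1 * n2 end.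

Inductive expr : Type :=
  | Eval (v : val)
  | Evar (x : var)
  | Eop (o : binop) (e1 e2 : expr).

Inductive cmd : Type :=
  | Cskip
  | Calloc (x : var)
  | Cassign (x : var) (e : expr)
  | Cseq (c1 c2 : cmd)
  | Cif (e : expr) (c1 c2 : cmd)
  | Cwhile (e : expr) (c : cmd).

Definition store := {fmap var -> val}.

Inductive evalE : expr -> store -> val -> Prop :=
  | E_val v s : evalE (Eval v) s v
  | E_var x (s : store) v : s.[? x] = Some v -> evalE (Evar x) s v
  | E_op o e1 e2 s n1 n2 :
      evalE e1 s (Vnat n1) -> evalE e2 s (Vnat n2) ->
      evalE (Eop o e1 e2) s (Vnat (eval_op o n1 n2)).

Inductive bigstep : cmd -> store -> store -> Prop :=
  | B_skip s : bigstep Cskip s s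
  | B_alloc x s : x \notin domf s -> bigstep (Calloc x) s s.[x <- Vnull]
  | B_assign x e s v : x \in domf s -> evalE e s v ->
      bigstep (Cassign x e) s s.[x <- v]
  | B_seq c1 c2 s s' s'' : bigstep c1 s s' -> bigstep c2 s' s'' ->
      bigstep (Cseq c1 c2) s s''
  | B_if_true e c1 c2 s s' v : evalE e s v -> v <> Vnat 0 -> bigstep c1 s s' ->
      bigstep (Cif e c1 c2) s s'
  | B_if_false e c1 c2 s s' : evalE e s (Vnat 0) -> bigstep c2 s s' ->
      bigstep (Cif e c1 c2) s s'
  | B_while_true e c s s' s'' v : evalE e s v -> v <> Vnat 0 ->
      bigstep c s s' -> bigstep (Cwhile e c) s' s'' ->
      bigstep (Cwhile e c) s s''
  | B_while_false e c s : evalE e s (Vnat 0) -> bigstep (Cwhile e c) s s.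

CoInductive diverges : cmd -> store -> Prop :=
  | D_seq1 c1 c2 s : diverges c1 s -> diverges (Cseq c1 c2) s
  | D_seq2 c1 c2 s s' : bigstep c1 s s' -> diverges c2 s' ->
      diverges (Cseq c1 c2) s
  | D_if_true e c1 c2 s v : evalE e s v -> v <> Vnat 0 -> diverges c1 s ->
      diverges (Cif e c1 c2) s
  | D_if_false e c1 c2 s : evalE e s (Vnat 0) -> diverges c2 s ->
      diverges (Cif e c1 c2) s
  | D_while1 e c s v : evalE e s v -> v <> Vnat 0 -> diverges c s ->
      diverges (Cwhile e c) s
  | D_while2 e c s s' v : evalE e s v -> v <> Vnat 0 -> bigstep c s s' ->
      diverges (Cwhile e c) s' -> diverges (Cwhile e c) s.

(* Status flags: Conv = convergent (⇓), Div = divergent (⇑). *)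
Inductive status : Type := Conv | Div.

Inductive evalGE : expr -> store -> status -> val -> status -> Prop :=
  | GE_val v s : evalGE (Eval v) s Conv v Conv
  | GE_var x (s : store) v : s.[? x] = Some v -> evalGE (Evar x) s Conv v Conv
  | GE_op o e1 e2 s n1 n2 d d' :
      evalGE e1 s Conv (Vnat n1) d -> evalGE e2 s d (Vnat n2) d' ->
      evalGE (Eop o e1 e2) s Conv (Vnat (eval_op o n1 n2)) d'
  | GE_div e s v : evalGE e s Div v Div.

CoInductive coevalG : cmd -> store -> status -> store -> status -> Prop :=
  | G_skip s : coevalG Cskip s Conv s Conv
  | G_alloc x s : x \notin domf s -> coevalG (Calloc x) s Conv s.[x <- Vnull] Conv
  | G_assign x e s v d : x \in domf s -> evalGE e s Conv v d ->
      coevalG (Cassign x e) s Conv s.[x <- v] d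
  | G_seq c1 c2 s s' s'' d d' :
      coevalG c1 s Conv s' d -> coevalG c2 s' d s'' d' ->
      coevalG (Cseq c1 c2) s Conv s'' d'
  | G_if_true e c1 c2 s s' v d d' : v <> Vnat 0 -> evalGE e s Conv v d ->
      coevalG c1 s d s' d' -> coevalG (Cif e c1 c2) s Conv s' d'
  | G_if_false e c1 c2 s s' d d' : evalGE e s Conv (Vnat 0) d ->
      coevalG c2 s d s' d' -> coevalG (Cif e c1 c2) s Conv s' d'
  | G_while_true e c s s' s'' v d d' d'' :
      evalGE e s Conv v d -> v <> Vnat 0 -> coevalG c s d s' d' ->
      coevalG (Cwhile e c) s' d' s'' d'' -> coevalG (Cwhile e c) s Conv s'' d''
  | G_while_false e c s d : evalGE e s Conv (Vnat 0) d ->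
      coevalG (Cwhile e c) s Conv s d
  | G_div c s s' : coevalG c s Div s' Div.

(* Each divergence rule is mirrored by a flagged rule whose last premise
   carries the Div flag, which gives the forward direction by coinduction.
   Conversely, on a terminating configuration the flagged semantics is
   deterministic and ends in Conv, so a flagged derivation ending in Div only
   exists for non-terminating configurations; there, at a sequence or a loop
   iteration, one decides classically whether the first part terminates and
   picks the corresponding divergence rule, which keeps the coinduction
   productive. *)

From Stdlib Require Import Classical.
From mathcomp Require Import all_boot finmap.

Set Implicit Arguments.

Definition terminates (c : cmd) (s : store) : Prop := exists t, bigstep c s t.

Lemma evalE_evalGE e s v : evalE e s v -> evalGE e s Conv v Conv.
Proof. by elim=> *; econstructor; eauto. Qed.

Lemma evalGE_Conv e s v d : evalGE e s Conv v d -> d = Conv /\ evalE e s v.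
Proof.
move Ed0: Conv => d0 H; elim: H Ed0 => //.
- by move=> v0 s0 _; split; constructor.
- by move=> x s0 v0 Hx _; split; [|constructor].
- move=> o e1 e2 s0 n1 n2 d1 d2 _ IH1 _ IH2 /IH1 [Ed1 He1].
  by case: (IH2 (esym Ed1)) => -> He2; split; [|constructor].
Qed.

Lemma evalE_det e s v w : evalE e s v -> evalE e s w -> v = w.
Proof.
move=> H; elim: H w => [v0 s0|x s0 v0 Hx|o e1 e2 s0 n1 n2 _ IH1 _ IH2] w Hw.
- by inversion Hw.
- by inversion Hw as [|x' s1 w0 Hw0|]; congruence.
- inversion Hw as [| |o' e1' e2' s1 m1 m2 Hw1 Hw2]; subst.
  by case: (IH1 _ Hw1) => ->; case: (IH2 _ Hw2) => ->.
Qed.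

Lemma bigstep_coevalG c s t : bigstep c s t -> coevalG c s Conv t Conv.
Proof. by elim=> *; econstructor; eauto using evalE_evalGE. Qed.

Lemma evalGE_Conv_det e s v w d :
  evalE e s v -> evalGE e s Conv w d -> w = v /\ d = Conv.
Proof. by move=> He /evalGE_Conv [-> /(evalE_det He) ->]. Qed.

Lemma bigstep_coevalG_det c s t s1 d :
  bigstep c s t -> coevalG c s Conv s1 d -> s1 = t /\ d = Conv.
Proof.
move=> H; elim: H s1 d => {c s t}.
- by move=> s s1 d HG; inversion HG; split.
- by move=> x s _ s1 d HG; inversion HG; split.
- move=> x e s v _ He s1 d HG.
  inversion HG as [| |x' e' s0 v0 d0 _ Hev| | | | | |]; subst.
  by case: (evalGE_Conv_det He Hev) => -> ->.
- move=> c1 c2 s s' s'' _ IH1 _ IH2 s1 d HG.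
  inversion HG as [| | |c1' c2' s0 s2 s3 d1 d2 H1 H2| | | | |]; subst.
  by case: (IH1 _ _ H1) => Es2 Ed1; subst; apply: IH2.
- move=> e c1 c2 s s' v He Hv _ IH s1 d HG.
  inversion HG as [| | | |e' c1' c2' s0 s2 v0 d1 d2 _ Hev H1
                   |e' c1' c2' s0 s2 d1 d2 Hev| | |]; subst.
  + by case: (evalGE_Conv_det He Hev) => _ Ed1; subst; apply: IH.
  + by case: (evalGE_Conv_det He Hev) => /esym/Hv.
- move=> e c1 c2 s s' He _ IH s1 d HG.
  inversion HG as [| | | |e' c1' c2' s0 s2 v0 d1 d2 Hv Hev
                   |e' c1' c2' s0 s2 d1 d2 Hev H2| | |]; subst.
  + by case: (evalGE_Conv_det He Hev) => /Hv.
  + by case: (evalGE_Conv_det He Hev) => _ Ed1; subst; apply: IH.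
- move=> e c s s' s'' v He Hv _ IH1 _ IH2 s1 d HG.
  inversion HG as [| | | | | |e' c' s0 s2 s3 v0 d1 d2 d3 Hev _ H1 H2
                   |e' c' s0 d0 Hev|]; subst.
  + case: (evalGE_Conv_det He Hev) => _ Ed1; subst.
    by case: (IH1 _ _ H1) => Es2 Ed2; subst; apply: IH2.
  + by case: (evalGE_Conv_det He Hev) => /esym/Hv.
- move=> e c s He s1 d HG.
  inversion HG as [| | | | | |e' c' s0 s2 s3 v0 d1 d2 d3 Hev Hv
                   |e' c' s0 d0 Hev|]; subst.
  + by case: (evalGE_Conv_det He Hev) => /Hv.
  + by case: (evalGE_Conv_det He Hev).
Qed.

Lemma terminates_not_coevalG_Div c s s' :
  terminates c s -> ~ coevalG c s Conv s' Div.
Proof. by case=> t Ht /(bigstep_coevalG_det Ht) []. Qed.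

Lemma diverges_coevalG c s s' : diverges c s -> coevalG c s Conv s' Div.
Proof.
move: c s; cofix IH => c s [].
- by move=> c1 c2 s0 H1; econstructor; [apply: IH H1|constructor].
- by move=> c1 c2 s0 s1 B H2; econstructor;
    [apply: bigstep_coevalG B|apply: IH H2].
- by move=> e c1 c2 s0 v E Hv H1; econstructor;
    [exact: Hv|exact: evalE_evalGE E|apply: IH H1].
- by move=> e c1 c2 s0 E H2; econstructor;
    [exact: evalE_evalGE E|apply: IH H2].
- by move=> e c0 s0 v E Hv H1; econstructor;
    [exact: evalE_evalGE E|exact: Hv|apply: IH H1|constructor].
- by move=> e c0 s0 s1 v E Hv B H2; econstructor;
    [exact: evalE_evalGE E|exact: Hv|apply: bigstep_coevalG B|apply: IH H2].
Qed.

Lemma coevalG_diverges c s s1 d :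
  ~ terminates c s -> coevalG c s Conv s1 d -> diverges c s.
Proof.
move: c s s1 d; cofix IH => c s s1 d N HG.
inversion HG as [s0|x s0 Hx|x e s0 v d0 Hx Hev
  |c1 c2 s0 s2 s3 d1 d2 H1 H2
  |e c1 c2 s0 s2 v d1 d2 Hv Hev H1|e c1 c2 s0 s2 d1 d2 Hev H2
  |e c0 s0 s2 s3 v d1 d2 d3 Hev Hv H1 H2|e c0 s0 d0 Hev|]; subst.
- by case: N; eexists; exact: B_skip.
- by case: N; eexists; exact: B_alloc Hx.
- case: (evalGE_Conv Hev) => _ He.
  by case: N; eexists; exact: B_assign Hx He.
- case: (classic (terminates c1 s)) => [[t Ht]|N1];
    last exact/D_seq1/(IH _ _ _ _ N1 H1).
  case: (bigstep_coevalG_det Ht H1) => Es2 Ed1; subst.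
  apply: (D_seq2 Ht); apply: (IH _ _ _ _ _ H2) => -[u Hu].
  by apply: N; exists u; exact: B_seq Ht Hu.
- case: (evalGE_Conv Hev) => Ed1 He; subst.
  apply: (D_if_true _ He Hv); apply: (IH _ _ _ _ _ H1) => -[u Hu].
  by apply: N; exists u; exact: B_if_true He Hv Hu.
- case: (evalGE_Conv Hev) => Ed1 He; subst.
  apply: (D_if_false _ He); apply: (IH _ _ _ _ _ H2) => -[u Hu].
  by apply: N; exists u; exact: B_if_false He Hu.
- case: (evalGE_Conv Hev) => Ed1 He; subst.
  case: (classic (terminates c0 s)) => [[t Ht]|N1];
    last exact: D_while1 He Hv (IH _ _ _ _ N1 H1).
  case: (bigstep_coevalG_det Ht H1) => Es2 Ed2; subst.
  apply: (D_while2 He Hv Ht); apply: (IH _ _ _ _ _ H2) => -[u Hu].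
  by apply: N; exists u; exact: B_while_true He Hv Ht Hu.
- case: (evalGE_Conv Hev) => _ He.
  by case: N; eexists; exact: B_while_false.
Qed.

Theorem theorem18 (c : cmd) (s s' : store) :
  diverges c s <-> coevalG c s Conv s' Div.
Proof.
split; first exact: diverges_coevalG.
move=> HG; apply: (coevalG_diverges _ HG) => Hterm.
exact: terminates_not_coevalG_Div Hterm HG.
Qed.
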